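(* Let $(X,d)$ be a metric space, $\mu$ a Borel probability measure on $X$, and $T:X\to X$ a measurable map preserving $\mu$. Let $B_1\supseteq B_2\supseteq\cdots$ be a decreasing sequence of measurable subsets of $X$ with $\lim_{n\to\infty}\mu(B_n)=0$. Then $$\liminf_{n\to\infty}\frac{\log\tau_{B_n}(x)}{-\log\mu(B_n)}\ge 1\quad\text{for }\mu\text{-a.e. }x\in X.$$
   Context: For a set $A\subseteq X$, the waiting (hitting) time is $\tau_A(x)=\min\{n\in\mathbf N: T^n(x)\in A\}$, with $\tau_A(x)=\infty$ if no such $n$ exists. *)

From HB Require Import structures.
From mathcomp Require Import all_boot all_order all_algebra.
From mathcomp Require Import all_classical all_reals all_analysis.
Set Implicit Arguments. Unset Strict Implicit. Unset Printing Implicit Defensive.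
Import Order.TTheory GRing.Theory Num.Theory.
Local Open Scope classical_set_scope.
Local Open Scope ring_scope.

Notation borel X := (g_sigma_algebraType (@open X)).

(* Hitting (waiting) time tau_A(x) = min { n >= 1 : T^n x \in A },
   valued in \bar R, equal to +oo when the set is empty
   (the infimum of a set of naturals is its minimum). *)
Definition hitting_time (R : realType) (X : Type) (T : X -> X) (A : set X)
    (x : X) : \bar R :=
  ereal_inf [set (n%:R)%:E | n in [set n : nat | (0 < n)%N /\ A (iter n T x)]].

Definition elog (R : realType) (t : \bar R) : \bar R :=
  match t with
  | r%:E => (ln r)%:E
  | +oo%E => +oo%E
  | -oo%E => -oo%E
  end.

Definition neglog (R : realType) (m : \bar R) : \bar R :=
  if m == 0%E then +oo%E else (- ln (fine m))%:E.

Definition hit_ratio (R : realType) (tau m : \bar R) : \bar R :=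
  if tau == +oo%E then +oo%E else (elog tau * (neglog m)^-1)%E.

From HB Require Import structures.
From mathcomp Require Import all_boot all_order all_algebra.
From mathcomp Require Import all_classical all_reals all_analysis.
From mathcomp Require Import ring lra.
Set Implicit Arguments.
Unset Strict Implicit.
Unset Printing Implicit Defensive.
Import Order.TTheory GRing.Theory Num.Theory.
Local Open Scope classical_set_scope.
Local Open Scope ring_scope.

(* Fix a and put c_j = 2^-((a+2) j), K_j = 2^((a+1)(j+1)).  Let D_j be the set
   of points that visit, within K_j steps, the first B_n of measure at most
   c_j.  By invariance mu(D_j) <= K_j c_j = 2^(a+1-j), so by Borel-Cantelli
   almost every x lies in only finitely many D_j.  For such an x and large n,
   bracket c_(j+1) < mu(B_n) <= c_j: since the B_n decrease, B_n lies in the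
   set defining D_j, hence tau_(B_n)(x) > K_j and
   log tau / -log mu(B_n) >= log K_j / log (1 / c_(j+1)) = (a+1)/(a+2).
   Let a go to infinity. *)

Lemma ae_eventually_notin d (X : measurableType d) (R : realType)
    (mu : {measure set X -> \bar R}) (F : (set X)^nat) :
  (forall n, measurable (F n)) -> (\sum_(n <oo) mu (F n) < +oo)%E ->
  {ae mu, forall x, \forall n \near \oo, ~ F n x}.
Proof.
move=> mF sumF; exists (lim_sup_set F); split.
- by apply: bigcapT_measurable => n; exact: bigcup_measurable.
- exact: lim_sup_set_cvg0.
move=> x /= Fx_often N _; apply: contrapT => notFx; apply: Fx_often.
by exists N => // n Nn Fnx; apply: notFx; exists n.
Qed.

Lemma limn_einf_ge_near (R : realType) (u : (\bar R)^nat) (l : \bar R) :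
  (\forall n \near \oo, l <= u n)%E -> (l <= limn_einf u)%E.
Proof.
move=> [N _ lu]; rewrite limn_einf_lim.
apply: lime_ge; first exact: is_cvg_einfs.
exists N => // n /= Nn; apply/ereal_infP => _ [k /= nk <-].
by apply: lu; exact: leq_trans nk.
Qed.

Lemma lee1_from_below (R : realType) (L : \bar R) :
  (forall k, ((1 - k.+2%:R^-1)%:E <= L)%E) -> (1 <= L)%E.
Proof.
move=> L_ge; apply/lee_subgt0Pr => e e0.
have [k ke] := ltr_add_invr e0; rewrite add0r in ke.
apply: le_trans (L_ge k); rewrite -EFinB lee_fin lerB // ltW //.
apply: le_lt_trans ke; rewrite lef_pV2 ?posrE ?ler_nat //.
Qed.

Lemma hit_ratio_ge (R : realType) (t : \bar R) (m u l : R) :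
  1 <= u -> (u%:E <= t)%E -> 0 < m < 1 -> - ln m <= l ->
  ((ln u / l)%:E <= hit_ratio t m%:E)%E.
Proof.
move=> u_ge1 ut /andP[m_gt0 m_lt1] ml.
case: t ut => [r||] //= ur; last by rewrite /hit_ratio eqxx leey.
have lnm_gt0 : 0 < - ln m by rewrite oppr_gt0 ln_lt0 // m_gt0.
have lnu_ge0 : 0 <= ln u by rewrite ln_ge0.
have lnur : ln u <= ln r.
  by rewrite ler_ln ?posrE // (lt_le_trans ltr01 (le_trans u_ge1 _)) -?lee_fin.
rewrite /hit_ratio /= /neglog eqe gt_eqF //= inver gt_eqF // -EFinM lee_fin.
apply: le_trans (_ : ln r / l <= _).
  by rewrite ler_wpM2r // invr_ge0 (le_trans _ ml) // ltW.
rewrite ler_wpM2l ?(le_trans lnu_ge0) // lef_pV2 ?posrE //.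
exact: lt_le_trans lnm_gt0 ml.
Qed.

Section hits_within.
Variables (X : Type) (T : X -> X).

Definition hits_within (K : nat) (A : set X) : set X :=
  \bigcup_(i in `I_K) (iter i.+1 T @^-1` A).

Lemma hits_withinS K K' A A' :
  (K <= K')%N -> A `<=` A' -> hits_within K A `<=` hits_within K' A'.
Proof.
by move=> KK' AA' x [i /= iK Ax]; exists i; [exact: leq_trans KK'|exact: AA'].
Qed.

Lemma hits_within_iter K A x i :
  (0 < i <= K)%N -> A (iter i T x) -> hits_within K A x.
Proof. by case: i => // i iK Ax; exists i. Qed.

Lemma hitting_time_ge (R : realType) K A x :
  ~ hits_within K A x -> (K.+1%:R%:E <= hitting_time R T A x)%E.
Proof.
move=> Kx; apply/ereal_infP => _ [i [i0 Ai] <-]; rewrite lee_fin ler_nat.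
rewrite ltnNge; apply: contra_notN Kx => iK.
by apply: hits_within_iter Ai; apply/andP.
Qed.

Lemma hitting_time_eqy (R : realType) A x :
  (forall K, ~ hits_within K A x) -> hitting_time R T A x = +oo%E.
Proof.
move=> noKx; rewrite /hitting_time; set S := (Y in ereal_inf Y).
suff -> : S = set0 by rewrite ereal_inf0.
apply/seteqP; split => // y [i [i0 Ai] _].
by apply: (noKx i); apply: hits_within_iter Ai; rewrite i0 leqnn.
Qed.

End hits_within.

Section measure_preserving.
Context d (X : measurableType d) (R : realType).
Variable mu : {measure set X -> \bar R}.
Variable T : X -> X.
Hypothesis mT : measurable_fun setT T.
Hypothesis Tpres : forall A, measurable A -> mu (T @^-1` A) = mu A.

Let measurable_preimage A : measurable A -> measurable (T @^-1` A).
Proof. by move=> mA; rewrite -[T @^-1` A]setTI; exact: mT. Qed.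

Lemma measurable_iter_preimage i A :
  measurable A -> measurable (iter i T @^-1` A).
Proof.
elim: i A => [//|i IH] A mA.
by apply: (IH (T @^-1` A)); exact: measurable_preimage.
Qed.

Lemma measure_iter_preimage i A : measurable A -> mu (iter i T @^-1` A) = mu A.
Proof.
elim: i A => [//|i IH] A mA.
by rewrite -(Tpres mA) -(IH _ (measurable_preimage mA)).
Qed.

Lemma measurable_hits_within K A :
  measurable A -> measurable (hits_within T K A).
Proof.
by move=> mA; apply: bigcup_measurable => i _; exact: measurable_iter_preimage.
Qed.

Lemma measure_hits_within_le K A e :
  measurable A -> (mu A <= e%:E)%E ->
  (mu (hits_within T K A) <= (e *+ K)%:E)%E.
Proof.
move=> mA Ae; rewrite /hits_within bigcup_mkord.
have miter i : measurable (iter i.+1 T @^-1` A).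
  exact: measurable_iter_preimage.
apply: le_trans
  (content_subadditive mu (fun i _ => miter i) _ (@subset_refl _ _)) _.
  by apply: bigsetU_measurable => i _.
apply: le_trans (_ : (\sum_(i < K) e%:E <= _)%E).
  by apply: lee_sum => i _; rewrite /= measure_iter_preimage.
by rewrite sumEFin sumr_const card_ord.
Qed.

Variable B : nat -> set X.
Hypothesis mB : forall n, measurable (B n).
Hypothesis Bdecr : forall n, B n.+1 `<=` B n.
Hypothesis Blim : (fun n => mu (B n)) @ \oo --> 0%E.
Variable a : nat.

Let c j : R := (2 ^ (a.+2 * j))%:R^-1.
Let K j := (2 ^ (a.+1 * j.+1))%N.

Let c_gt0 j : 0 < c j.
Proof. by rewrite invr_gt0 ltr0n expn_gt0. Qed.

Let c_lt1 j : (0 < j)%N -> c j < 1.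
Proof.
move=> j_gt0; rewrite invf_lt1 ?ltr0n ?expn_gt0 // ltr1n.
by rewrite -(expn0 2) ltn_exp2l ?muln_gt0.
Qed.

Let c_nonincreasing j j' : (j <= j')%N -> c j' <= c j.
Proof.
move=> jj'; rewrite lef_pV2 ?posrE ?ltr0n ?expn_gt0 // ler_nat.
by rewrite leq_pexp2l // leq_mul2l jj' orbT.
Qed.

Let ex_c_lt m : 0 < m -> exists j, c j < m.
Proof.
move=> m_gt0; have [j jm] := ltr_add_invr m_gt0; rewrite add0r in jm.
exists j; apply: le_lt_trans jm.
rewrite lef_pV2 ?posrE ?ltr0n ?expn_gt0 // ler_nat.
by apply: leq_trans (ltn_expl j (ltnSn 1)) _; rewrite leq_pexp2l // leq_pmull.
Qed.

Let mu_B_lt e : 0 < e -> \forall n \near \oo, (mu (B n) < e%:E)%E.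
Proof.
by move=> e_gt0; exact: Blim _ (nbhs_open_ereal_lt (f := fun=> e) e_gt0).
Qed.

Let B_below j : exists n, (mu (B n) <= (c j)%:E)%E.
Proof.
by have [N _ BN] := mu_B_lt (c_gt0 j); exists N; exact: ltW (BN N (leqnn N)).
Qed.

Let first_below j := ex_minn (B_below j).

Let first_belowP j : (mu (B (first_below j)) <= (c j)%:E)%E.
Proof. by rewrite /first_below; case: ex_minnP. Qed.

Let first_below_min j n : (mu (B n) <= (c j)%:E)%E -> (first_below j <= n)%N.
Proof. by rewrite /first_below; case: ex_minnP => m _ + Bn; apply. Qed.

Let D j := hits_within T (K j) (B (first_below j)).

Let measurable_D j : measurable (D j).
Proof. exact: measurable_hits_within. Qed.

Let summable_D : (\sum_(j <oo) mu (D j) < +oo)%E.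
Proof.
have geom : (\sum_(j <oo) ((2 ^ a.+2)%:R / (2 ^ (j + 1))%:R : R)%:E < +oo)%E.
  have := @cvg_geometric_eseries_half R (2 ^ a.+2)%:R 0.
  by move=> /cvg_lim ->; rewrite ?ltry.
apply: le_lt_trans geom.
apply: lee_nneseries => [j _ _|j _]; first exact: measure_ge0.
apply: le_trans (measure_hits_within_le _ (mB _) (first_belowP j)) _.
rewrite lee_fin le_eqVlt; apply/orP; left.
rewrite /c /K -[X in X == _]mulr_natl eqr_div ?pnatr_eq0 ?expn_eq0 //.
rewrite -!natrM eqr_nat -!expnD.
by apply/eqP; congr (2 ^ _)%N; ring.
Qed.

Let B_sub m n : (m <= n)%N -> B n `<=` B m.
Proof.
apply: (homo_leq (r := fun U V => V `<=` U)) => // [U|V U W UV VW].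
  exact: subset_refl.
exact: subset_trans VW UV.
Qed.

Let hits_first_below j n x :
  (mu (B n) <= (c j)%:E)%E -> hits_within T (K j) (B n) x -> D j x.
Proof.
by move=> Bn_le; apply: hits_withinS => //; exact/B_sub/first_below_min.
Qed.

Let K_ge j : (j <= K j)%N.
Proof.
apply/ltnW/(leq_trans (ltn_expl j (ltnSn 1))).
by rewrite leq_pexp2l // (leq_trans (leqnSn j)) // leq_pmull.
Qed.

Let c_bracket m J :
  0 < m -> m <= c J -> exists2 j, (J <= j)%N & c j.+1 < m <= c j.
Proof.
move=> m_gt0 mJ; have [k ck] := ex_c_lt m_gt0.
have P_bound j : m <= c j -> (j <= k)%N.
  move=> mj; rewrite leqNgt; apply/negP => /ltnW/c_nonincreasing cjk.
  by have := le_lt_trans (le_trans mj cjk) ck; rewrite ltxx.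
case: (ex_maxnP (ex_intro (fun j => m <= c j) J mJ) P_bound) => j mj j_max.
exists j; first exact: j_max.
by rewrite mj andbT ltNge; apply/negP => /j_max; rewrite ltnn.
Qed.

Let ln_expn2 k : ln ((2 ^ k)%N%:R : R) = ln 2 *+ k.
Proof. by rewrite natrX lnXn. Qed.

Let ln_ratio j : ln (K j)%:R / (ln 2 *+ (a.+2 * j.+1)) = 1 - a.+2%:R^-1 :> R.
Proof.
have ln2_neq0 : ln (2 : R) != 0 by rewrite gt_eqF // ln_gt0 // ltr1n.
rewrite /K ln_expn2 -!(mulr_natr (ln 2)) !natrM; field.
rewrite ln2_neq0 andbT; apply/andP; split; apply: lt0r_neq0.
  by have := ler0n R a; lra.
by have := ler0n R j; lra.
Qed.

Let hit_ratio_ge_near x : (\forall j \near \oo, ~ D j x) ->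
  \forall n \near \oo,
    ((1 - a.+2%:R^-1)%:E <= hit_ratio (hitting_time R T (B n) x) (mu (B n)))%E.
Proof.
move=> [J _ noD]; have [N _ BN] := mu_B_lt (c_gt0 J.+1).
exists N => // n /BN /ltW BnJ.
have no_hit j : (J < j)%N -> (mu (B n) <= (c j)%:E)%E ->
    ~ hits_within T (K j) (B n) x.
  by move=> Jj Bnj /(hits_first_below Bnj); apply: noD; exact: ltnW.
have [Bn0|Bn_neq0] := eqVneq (mu (B n)) 0%E.
  rewrite /hit_ratio hitting_time_eqy ?eqxx ?leey // => k.
  apply: contra_not (no_hit (maxn J.+1 k) (leq_maxl _ _) _).
    by apply: hits_withinS => //; exact: leq_trans (leq_maxr _ _) (K_ge _).
  by rewrite Bn0 lee_fin ltW.
have Bn_fin : mu (B n) \is a fin_num.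
  by rewrite ge0_fin_numE ?measure_ge0 // (le_lt_trans BnJ) ?ltry.
move: Bn_neq0 BnJ; rewrite -(fineK Bn_fin); set m := fine (mu (B n)) => m_neq0.
rewrite lee_fin => mJ.
have m_gt0 : 0 < m.
  by rewrite lt0r -eqe m_neq0 -lee_fin fineK // measure_ge0.
have [j Jj /andP[cm mj]] := c_bracket m_gt0 mJ.
rewrite -(ln_ratio j); apply: hit_ratio_ge.
- by rewrite ler1n expn_gt0.
- have Bnj : (mu (B n) <= (c j)%:E)%E by rewrite -(fineK Bn_fin) lee_fin.
  apply: (le_trans _ (hitting_time_ge R (no_hit j Jj Bnj))).
  by rewrite lee_fin ler_nat.
- by rewrite m_gt0 (le_lt_trans mj) // c_lt1 // (leq_trans _ Jj).
- rewrite lerNl -ln_expn2 -lnV ?posrE ?ltr0n ?expn_gt0 //.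
  by rewrite ltW // ltr_ln ?posrE.
Qed.

Lemma ae_liminf_hit_ratio_ge :
  {ae mu, forall x, ((1 - a.+2%:R^-1)%:E <=
    limn_einf (fun n => hit_ratio (hitting_time R T (B n) x) (mu (B n))))%E}.
Proof.
apply: filterS (ae_eventually_notin measurable_D summable_D) => x noD.
exact/limn_einf_ge_near/hit_ratio_ge_near.
Qed.

End measure_preserving.

Theorem proposition2p1 (R : realType) (X : pseudoPMetricType R)
  (hX : hausdorff_space X)
  (mu : probability (borel X) R)
  (T : borel X -> borel X)
  (mT : measurable_fun setT T)
  (Tpres : forall A : set (borel X), measurable A -> mu (T @^-1` A) = mu A)
  (B : nat -> set (borel X))
  (mB : forall n, measurable (B n))
  (Bdecr : forall n, B n.+1 `<=` B n)
  (Blim : (fun n => mu (B n)) @ \oo --> 0%E) :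
  {ae mu, forall x, (1 <= limn_einf
     (fun n => hit_ratio (hitting_time R T (B n) x) (mu (B n))))%E}.
Proof.
have := ae_foralln (fun a => ae_liminf_hit_ratio_ge mT Tpres mB Bdecr Blim a).
by apply: filterS => x; exact: lee1_from_below.
Qed.
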